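(* Let $a,b,\alpha,\beta$ be complex numbers with $\beta a-\alpha b\neq0$, let $n\ge1$, and write $\Psi_r(m)=\Psi\left(\begin{array}{cc|c} a & b & m \\ \alpha & \beta & r \end{array}\right)$, $\Phi_r(m)=\Phi\left(\begin{array}{cc|c} a & b & m \\ \alpha & \beta & r \end{array}\right)$. Then for $0\le r\le\lfloor (n-1)/2\rfloor$, \[ \Phi_r(n)=\frac{(2\alpha-\beta)\big(\lfloor (n+1)/2\rfloor-r\big)\Psi_r(n+1)+(2a-b)(r+1)\Psi_{r+1}(n+1)}{(\beta a-\alpha b)(n+1)}. \]
   Context: $\delta(m)=1$ for $m$ odd, $0$ for $m$ even; $\lfloor\cdot\rfloor$ is the floor. For $m\ge1$ and numbers with $\beta a-\alpha b\ne0$, $\Psi\left(\begin{array}{cc|c} a & b & m \\ \alpha & \beta & r \end{array}\right)$ ($0\le r\le\lfloor m/2\rfloor$) and $\Phi\left(\begin{array}{cc|c} a & b & m \\ \alpha & \beta & r \end{array}\right)$ ($0\le r\le\lfloor (m-1)/2\rfloor$) are the unique numbers such that, identically in $x,y$, $(\beta a-\alpha b)^{\lfloor m/2\rfloor}\frac{x^m+y^m}{(x+y)^{\delta(m)}}=\sum_{r}\Psi\left(\begin{array}{cc|c} a & b & m \\ \alpha & \beta & r \end{array}\right)(\alpha x^2+\beta xy+\alpha y^2)^{\lfloor m/2\rfloor-r}(ax^2+bxy+ay^2)^r$ and $(\beta a-\alpha b)^{\lfloor (m-1)/2\rfloor}\frac{x^m-y^m}{(x-y)(x+y)^{\delta(m-1)}}=\sum_{r}\Phi\left(\begin{array}{cc|c}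 a & b & m \\ \alpha & \beta & r \end{array}\right)(\alpha x^2+\beta xy+\alpha y^2)^{\lfloor (m-1)/2\rfloor-r}(ax^2+bxy+ay^2)^r$. *)

From HB Require Import structures.
From mathcomp Require Import all_boot all_order all_algebra.
From mathcomp Require Import complex Rstruct.
Set Implicit Arguments. Unset Strict Implicit. Unset Printing Implicit Defensive.
Import Order.TTheory GRing.Theory Num.Theory.
Local Open Scope ring_scope.

Definition C : Type := (Rdefinitions.R)[i].

Definition delta (m : nat) : nat := odd m.

Definition is_Psi (a b al be : C) (Psi : nat -> nat -> C) : Prop :=
  forall m : nat, (1 <= m)%N -> forall x y : C, (x + y) ^+ delta m != 0 ->
    (be * a - al * b) ^+ (m %/ 2) * ((x ^+ m + y ^+ m) / (x + y) ^+ delta m)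
    = \sum_(r < (m %/ 2).+1)
        Psi m r * (al * x ^+ 2 + be * x * y + al * y ^+ 2) ^+ (m %/ 2 - r)
                * (a * x ^+ 2 + b * x * y + a * y ^+ 2) ^+ r.

Definition is_Phi (a b al be : C) (Phi : nat -> nat -> C) : Prop :=
  forall m : nat, (1 <= m)%N -> forall x y : C,
    (x - y) * (x + y) ^+ delta (m - 1) != 0 ->
    (be * a - al * b) ^+ ((m - 1) %/ 2)
      * ((x ^+ m - y ^+ m) / ((x - y) * (x + y) ^+ delta (m - 1)))
    = \sum_(r < ((m - 1) %/ 2).+1)
        Phi m r * (al * x ^+ 2 + be * x * y + al * y ^+ 2) ^+ ((m - 1) %/ 2 - r)
                * (a * x ^+ 2 + b * x * y + a * y ^+ 2) ^+ r.

Set Warnings "-notation-overridden,-ambiguous-paths".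
From mathcomp Require Import all_boot all_order all_algebra.
From mathcomp Require Import complex Rstruct.
From mathcomp Require Import ring zify.

(** Put y = 1: both defining identities become polynomial identities in x,
   since they hold off the finitely many zeros of the denominators.  The
   operator d/dx - d/dy maps x^(n+1) + y^(n+1) to (n+1)(x^n - y^n), kills
   x + y, and maps the forms al x^2 + be x y + al y^2 and a x^2 + b x y + a y^2
   to (2 al - be)(x - y) and (2 a - b)(x - y).  Applied to the Psi-expansion of
   degree n + 1 it therefore produces (x - y) (x + y)^delta times an expansion
   of degree (n-1)/2 in the same products of the two forms, which must agree
   with D (n + 1) times the Phi-expansion.  When D = be a - al b <> 0 these
   products are linearly independent: at a zero of the first form that is not
   a zero of the second only the top term survives, and then the first form
   can be cancelled. *)

Import Order.TTheory GRing.Theory Num.Theory.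
Local Open Scope ring_scope.

Section AntidiagonalDerivative.
Context {R : comNzRingType}.
Implicit Types (f g : {poly R}) (k l : nat).

(* A polynomial f stands for a form F(x, y) of degree k with f(x) = F(x, 1);
   by Euler's identity (d/dx - d/dy) F then corresponds to dxy k f. *)
Definition dxy k f : {poly R} := (1 + 'X) * f^`() - k%:R * f.

Lemma dxyD k f g : dxy k (f + g) = dxy k f + dxy k g.
Proof. rewrite /dxy derivD; ring. Qed.

Lemma dxy0 k : dxy k 0 = 0.
Proof. rewrite /dxy deriv0; ring. Qed.

Lemma dxy_sum k I (r : seq I) (P : pred I) (F : I -> {poly R}) :
  dxy k (\sum_(i <- r | P i) F i) = \sum_(i <- r | P i) dxy k (F i).
Proof. exact: (big_morph _ (dxyD k) (dxy0 k)). Qed.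

Lemma dxyZ k c f : dxy k (c *: f) = c *: dxy k f.
Proof. rewrite /dxy -!mul_polyC deriv_mulC; ring. Qed.

Lemma dxyM k l f g : dxy (k + l) (f * g) = dxy k f * g + f * dxy l g.
Proof. rewrite /dxy derivM natrD; ring. Qed.

Lemma dxyX k f j : dxy (k * j) (f ^+ j) = j%:R * f ^+ j.-1 * dxy k f.
Proof.
elim: j => [|j IHj]; first by rewrite muln0 expr0 /dxy derivC; ring.
rewrite mulnS exprS dxyM IHj; case: j {IHj} => [|j] /=.
  by rewrite !expr0; ring.
by rewrite [in RHS]mulrSr exprS; ring.
Qed.

Lemma dxy_XaddC_expb (d : bool) : dxy d (('X + 1) ^+ d) = 0.
Proof.
case: d => /=; last by rewrite expr0 /dxy derivC; ring.
by rewrite expr1 /dxy derivD derivX derivC; ring.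
Qed.

Lemma dxy_XnD1 m : dxy m.+1 ('X^(m.+1) + 1) = m.+1%:R * ('X^m - 1).
Proof. rewrite /dxy derivD derivXn derivC /= exprS -mulr_natr; ring. Qed.

Definition palin (a b : R) : {poly R} := a%:P * 'X^2 + b%:P * 'X + a%:P.

Lemma horner_palin a b x : (palin a b).[x] = a * x ^+ 2 + b * x + a.
Proof. by rewrite /palin !hornerE. Qed.

Lemma dxy_palin a b : dxy 2 (palin a b) = (2 * a - b)%:P * ('X - 1).
Proof.
by rewrite /dxy /palin !derivE /= polyCB polyCM polyC_natr expr1; ring.
Qed.

Section BinaryForm.
Variables a b al be : R.

Definition binform L (c : nat -> R) : {poly R} :=
  \sum_(s < L.+1) c s *: (palin al be ^+ (L - s) * palin a b ^+ s).

Lemma binformZ (t : R) L c : t *: binform L c = binform L (fun s => t * c s).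
Proof. by rewrite /binform scaler_sumr; apply: eq_bigr => s _; rewrite scalerA. Qed.

Lemma binformS L c :
  binform L.+1 c = palin al be * binform L c + c L.+1 *: palin a b ^+ L.+1.
Proof.
rewrite /binform big_ord_recr /= subnn expr0 mul1r mulr_sumr; congr (_ + _).
by apply: eq_bigr => s _; rewrite -scalerAr mulrA -exprS subSn // -ltnS ltn_ord.
Qed.

Lemma horner_binform L c x : (binform L c).[x] =
  \sum_(s < L.+1) c s * (palin al be).[x] ^+ (L - s) * (palin a b).[x] ^+ s.
Proof.
rewrite /binform horner_sum; apply: eq_bigr => s _.
by rewrite hornerZ hornerM !horner_exp mulrA.
Qed.

Lemma dxy_binform L c :
  dxy (2 * L.+1) (binform L.+1 c) = ('X - 1) * binform L (fun s =>
    (2 * al - be) * (L.+1 - s)%:R * c s + (2 * a - b) * s.+1%:R * c s.+1).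
Proof.
set P := palin al be; set Q := palin a b.
have dxy_term (s : 'I_L.+2) : dxy (2 * L.+1) (c s *: (P ^+ (L.+1 - s) * Q ^+ s)) =
    ('X - 1) * (c s *: ((L.+1 - s)%:R * (2 * al - be)%:P * (P ^+ (L - s) * Q ^+ s))
              + c s *: (s%:R * (2 * a - b)%:P * (P ^+ (L.+1 - s) * Q ^+ s.-1))).
  have -> : (2 * L.+1 = 2 * (L.+1 - s) + 2 * s)%N by have := ltn_ord s; lia.
  rewrite dxyZ dxyM !dxyX !dxy_palin -!mul_polyC subSKn.
  ring.
rewrite /binform dxy_sum (eq_bigr _ (fun s _ => dxy_term s)) -mulr_sumr.
congr (_ * _); rewrite big_split /= big_ord_recr [X in _ + X]big_ord_recl /= subnn.
rewrite !(mul0r, scaler0, addr0, add0r) -big_split; apply: eq_bigr => s _.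
rewrite /bump /= add0n subSS -!mul_polyC !(polyCD, polyCM, polyC_natr) /=.
ring.
Qed.

End BinaryForm.

End AntidiagonalDerivative.

Lemma poly_eq_mul_of_horner (F : numFieldType) (p q r : {poly F}) : q != 0 ->
  (forall x, q.[x] != 0 -> p.[x] / q.[x] = r.[x]) -> p = r * q.
Proof.
move=> q_neq0 pqr; apply/eqP; rewrite -subr_eq0.
suff /eqP : (p - r * q) * q = 0 by rewrite mulf_eq0 (negbTE q_neq0) orbF.
set E := _ * q.
have E_root x : root E x.
  apply/rootP; rewrite /E hornerM hornerD hornerN hornerM.
  have [->|qx_neq0] := eqVneq q.[x] 0; first by rewrite mulr0.
  by rewrite -(pqr x qx_neq0) divfK // subrr mul0r.
apply: (@roots_geq_poly_eq0 _ _ [seq i%:R | i <- iota 0 (size E)]).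
- by apply/allP => x _; exact: E_root.
- by rewrite map_inj_uniq ?iota_uniq // => i j /eqP; rewrite eqr_nat => /eqP.
- by rewrite size_map size_iota.
Qed.

Section BinaryFormUniqueness.
Context {F : numClosedFieldType} {a b al be : F}.
Hypothesis D_neq0 : be * a - al * b != 0.

Lemma palin_neq0 : palin al be != 0.
Proof.
apply: contra D_neq0 => /eqP P0.
have al0 : al = 0.
  by move/(congr1 (horner^~ 0)): P0; rewrite horner_palin horner0 => <-; ring.
have be0 : be = 0.
  by move/(congr1 (horner^~ 1)): P0; rewrite horner_palin horner0 al0 => <-; ring.
by rewrite al0 be0 !mul0r subrr.
Qed.

Lemma palin_root_not_root : exists2 x, root (palin al be) x & ~~ root (palin a b) x.
Proof.
have [x Px] : exists x, root (palin al be) x.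
  have [al0|al_neq0] := eqVneq al 0.
    by exists 0; rewrite rootE horner_palin al0 expr0n /= !mulr0 !add0r.
  pose s := sqrtC (be ^+ 2 - 4 * al ^+ 2).
  exists ((- be + s) / (2 * al)); apply/rootP; rewrite horner_palin.
  have -> : al * ((- be + s) / (2 * al)) ^+ 2 + be * ((- be + s) / (2 * al)) + al
      = (s ^+ 2 - (be ^+ 2 - 4 * al ^+ 2)) / (4 * al).
    by field; rewrite ?mulf_neq0 ?pnatr_eq0.
  by rewrite sqrtCK subrr mul0r.
exists x => //; apply: contra D_neq0 => Qx.
move/rootP: Px; move/rootP: Qx; rewrite !horner_palin => Qx Px.
have /eqP : (be * a - al * b) * x = 0.
  have -> : (be * a - al * b) * x
      = a * (al * x ^+ 2 + be * x + al) - al * (a * x ^+ 2 + b * x + a) by ring.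
  by rewrite Px Qx !mulr0 subrr.
rewrite mulf_eq0 => /orP [//|/eqP x0].
move: Px Qx; rewrite x0 expr0n /= !mulr0 !add0r => -> ->.
by rewrite mulr0 mul0r subrr.
Qed.

Lemma binform_inj L c d : binform a b al be L c = binform a b al be L d ->
  forall s, (s <= L)%N -> c s = d s.
Proof.
have [x /rootP Px Qx] := palin_root_not_root.
elim: L => [|L IHL] cd s.
  rewrite leqn0 => /eqP ->; move: cd.
  by rewrite /binform !big_ord1 !expr0 !mulr1 !alg_polyC => /polyC_inj.
have cdS : c L.+1 = d L.+1.
  move: (congr1 (horner^~ x) cd); rewrite !binformS !hornerD !hornerM Px !mul0r !add0r.
  rewrite !hornerZ horner_exp; apply: mulIf; rewrite expf_neq0 //; exact/rootP.
move: cd; rewrite !binformS cdS => /addIr /(mulfI palin_neq0) /IHL cd.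
by rewrite leq_eqVlt => /orP [/eqP ->|]; [exact: cdS | exact: cd].
Qed.

End BinaryFormUniqueness.

Lemma binform_Psi {a b al be : C} {Psi : nat -> nat -> C} m :
  is_Psi a b al be Psi -> (1 <= m)%N ->
  binform a b al be (m %/ 2) (Psi m) * ('X + 1) ^+ delta m
  = (be * a - al * b) ^+ (m %/ 2) *: ('X^m + 1).
Proof.
move=> hPsi m_ge1; symmetry; apply: poly_eq_mul_of_horner => [|x].
  by rewrite expf_neq0 // -polyC1 monic_neq0 ?monicXaddC.
rewrite !hornerE => x1_neq0.
rewrite -mulrA -[X in x ^+ m + X](expr1n _ m) hPsi ?expr1n // horner_binform.
by apply: eq_bigr => r _; rewrite !horner_palin !mulr1.
Qed.

Lemma binform_Phi {a b al be : C} {Phi : nat -> nat -> C} m :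
  is_Phi a b al be Phi -> (1 <= m)%N ->
  binform a b al be ((m - 1) %/ 2) (Phi m) * (('X - 1) * ('X + 1) ^+ delta (m - 1))
  = (be * a - al * b) ^+ ((m - 1) %/ 2) *: ('X^m - 1).
Proof.
move=> hPhi m_ge1; symmetry; apply: poly_eq_mul_of_horner => [|x].
  by rewrite mulf_neq0 ?expf_neq0 // -polyC1 monic_neq0 ?monicXaddC ?monicXsubC.
rewrite !hornerE => x1_neq0.
rewrite -mulrA -[X in x ^+ m - X](expr1n _ m) hPhi ?expr1n // horner_binform.
by apply: eq_bigr => r _; rewrite !horner_palin !mulr1.
Qed.

Theorem theorem12p1 (a b al be : C) (Psi Phi : nat -> nat -> C) :
  be * a - al * b != 0 ->
  is_Psi a b al be Psi -> is_Phi a b al be Phi ->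
  forall n r : nat, (1 <= n)%N -> (r <= (n - 1) %/ 2)%N ->
  Phi n r =
    ((2 * al - be) * ((n + 1) %/ 2 - r)%:R * Psi (n + 1)%N r
     + (2 * a - b) * (r + 1)%:R * Psi (n + 1)%N (r + 1)%N)
    / ((be * a - al * b) * (n + 1)%:R).
Proof.
move=> D_neq0 hPsi hPhi n r n_ge1 r_le.
set D := be * a - al * b in D_neq0 *.
set L := ((n - 1) %/ 2)%N in r_le *.
have halfS : ((n + 1) %/ 2 = L.+1)%N by lia.
have deltaS : delta (n + 1) = delta (n - 1).
  by rewrite /delta; case: n n_ge1 {L r_le halfS} => // n _; rewrite addn1 subn1 /= negbK.
have degS : (n + 1 = 2 * L.+1 + delta (n + 1))%N.
  by rewrite /delta -halfS -{1}(odd_double_half (n + 1)) -divn2; lia.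
pose e s := (2 * al - be) * (L.+1 - s)%:R * Psi (n + 1)%N s
            + (2 * a - b) * s.+1%:R * Psi (n + 1)%N s.+1.
have phi_psi : binform a b al be L (fun s => D * (n + 1)%:R * Phi n s)
             = binform a b al be L e.
  have q_neq0 : ('X - 1) * ('X + 1) ^+ delta (n - 1) != 0 :> {poly C}.
    by rewrite mulf_neq0 ?expf_neq0 // -polyC1 monic_neq0 ?monicXaddC ?monicXsubC.
  apply: (mulIf q_neq0); rewrite -binformZ -scalerAl binform_Phi // scalerA.
  rewrite mulrA [_ * ('X - 1)]mulrC -dxy_binform -deltaS.
  have := congr1 (dxy (n + 1)) (binform_Psi (n + 1) hPsi (leq_addl n 1)).
  rewrite {1}degS dxyM /delta dxy_XaddC_expb mulr0 addr0 halfS => ->.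
  rewrite -/D -/L dxyZ addn1 dxy_XnD1 -!mul_polyC.
  by rewrite !(polyCM, polyC_exp, polyC_natr) exprS; ring.
rewrite halfS [(r + 1)%N]addn1 -/(e r).
rewrite -(binform_inj D_neq0 _ _ _ phi_psi r r_le) [_ * Phi n r]mulrC mulfK //.
by rewrite mulf_neq0 // pnatr_eq0 addn1.
Qed.
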